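(* Let $n\ge 3$ and $\Delta,\Delta'\in\mathcal{P}_n$, and suppose there is $i\in\mathbb{Z}_n$ such that: $lab_\Delta((i+1,i))=lab_{\Delta'}((i+1,i))=\ominus$; $lab_\Delta((i-1,i))\neq lab_{\Delta'}((i-1,i))$; and $lab_\Delta((j_1,j_2))=lab_{\Delta'}((j_1,j_2))$ for every arc $(j_1,j_2)\neq(i-1,i)$ of the form $(j,j+1)$ or $(j+1,j)$, $j\in\mathbb{Z}_n$. Then $f^{(\Delta)}_{8,n}=f^{(\Delta')}_{8,n}$.
   Context: Cells are indexed by $\mathbb{Z}_n=\{0,\dots,n-1\}$, indices modulo $n$. Rule $8$ has local rule $r_8(x_1,x_2,x_3)=\neg x_1\wedge x_2\wedge x_3$ and global function $f_{8,n}(x)_i=r_8(x_{i-1},x_i,x_{i+1})$. An update schedule is an ordered partition $\Delta=(\Delta_1,\dots,\Delta_k)$ of $\mathbb{Z}_n$ into nonempty blocks; $\mathcal{P}_n$ is the set of them. For a block $B$ let $f^{(B)}(x)_i=f_{8,n}(x)_i$ if $i\in B$ and $x_i$ otherwise; $f^{(\Delta)}_{8,n}=f^{(\Delta_k)}\circ\cdots\circ f^{(\Delta_1)}$. (The paper states the conclusion as equality of the transition digraphs with arcs $(x,f^{(\Delta)}_{8,n}(x))$, equivalent to equality of the maps.) For $u,v\in\mathbb{Z}_n$ with $u\in\Delta_a$, $v\in\Delta_b$, $lab_\Delta((u,v))=\oplus$ if $b\le a$ and $\ominus$ if $a<b$. *)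

From mathcomp Require Import all_boot.
Set Implicit Arguments. Unset Strict Implicit. Unset Printing Implicit Defensive.

(* Cells are 'I_n; i+1 is ordS i and i-1 is ord_pred i (indices modulo n). *)
Definition config (n : nat) := 'I_n -> bool.

Definition r8 (x1 x2 x3 : bool) : bool := ~~ x1 && x2 && x3.

Definition f8 (n : nat) (x : config n) : config n :=
  fun i => r8 (x (ord_pred i)) (x i) (x (ordS i)).

(* An update schedule: an ordered partition of 'I_n into nonempty blocks,
   given as the sequence [Δ_1; ...; Δ_k]. *)
Definition is_schedule (n : nat) (D : seq {set 'I_n}) : Prop :=
  all (fun B : {set 'I_n} => B != set0) D /\ (forall i : 'I_n, count (fun B : {set 'I_n} => i \in B) D = 1).

Definition fblock (n : nat) (B : {set 'I_n}) (x : config n) : config n :=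
  fun i => if i \in B then f8 x i else x i.

Definition fsched (n : nat) (D : seq {set 'I_n}) (x : config n) : config n :=
  foldl (fun y B => fblock B y) x D.

(* index (0-based) of the block containing u *)
Definition blk (n : nat) (D : seq {set 'I_n}) (u : 'I_n) : nat :=
  find (fun B : {set 'I_n} => u \in B) D.

Variant label := Oplus | Ominus.

Definition lab (n : nat) (D : seq {set 'I_n}) (u v : 'I_n) : label :=
  if blk D v <= blk D u then Oplus else Ominus.

From mathcomp Require Import all_boot.

Set Implicit Arguments.
Unset Strict Implicit.
Unset Printing Implicit Defensive.

(* When cell i+1 is updated strictly before cell i, it takes the value
   ~~ x_i && ..., so cell i, updated later to x_i && x'_{i+1} && ..., always
   ends at 0, whatever the order between i-1 and i.  Everywhere else the
   outcome of a block-sequential schedule only depends on which neighbours of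
   each cell are updated before it, i.e. on the labels of the arcs
   (j, j+1) and (j+1, j); an induction on the block of the cell concludes. *)

Lemma count1_drop_has (T : Type) (p : pred T) (s : seq T) k :
  count p s = 1 -> find p s < k -> ~~ has p (drop k s).
Proof.
move=> count_p lt_find_k.
have has_p : has p s by rewrite has_count count_p.
have take_p : has p (take k s) by rewrite has_take.
have := count_cat p (take k s) (drop k s); rewrite cat_take_drop count_p.
move: take_p; rewrite !has_count; case: (count p (take k s)) => [|[|]] // _.
by rewrite add1n => -[<-].
Qed.

Section BlockSequential.

Variable n : nat.
Implicit Types (D : seq {set 'I_n}) (x : config n).

Lemma fsched_cat D1 D2 x : fsched (D1 ++ D2) x = fsched D2 (fsched D1 x).
Proof. exact: foldl_cat. Qed.

Lemma fsched_notin D x j :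
  ~~ has (fun B : {set 'I_n} => j \in B) D -> fsched D x j = x j.
Proof.
elim: D x => [|B D IH] x //= /norP[j_notin_B /IH ->].
by rewrite /fblock (negbTE j_notin_B).
Qed.

Lemma fsched_take D x k j : is_schedule D ->
  fsched (take k D) x j = if blk D j < k then fsched D x j else x j.
Proof.
move=> [_ count_D]; case: ifP => [lt_j_k | /negbT ge_j_k].
  rewrite -[in RHS](cat_take_drop k D) fsched_cat [RHS]fsched_notin //.
  exact: count1_drop_has.
by rewrite fsched_notin //; apply: contra ge_j_k; exact: find_ltn.
Qed.

Lemma fsched_cell D x c : is_schedule D ->
  fsched D x c = f8 (fsched (take (blk D c) D) x) c.
Proof.
move=> [_ count_D]; set k := blk D c.
have has_c : has (fun B : {set 'I_n} => c \in B) D by rewrite has_count count_D.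
have c_in_Bk : c \in nth set0 D k := nth_find set0 has_c.
have lt_k_D : k < size D by rewrite -has_find.
rewrite -[in LHS](cat_take_drop k D) (drop_nth set0 lt_k_D) fsched_cat /=.
by rewrite fsched_notin ?count1_drop_has // /fblock c_in_Bk.
Qed.

Lemma fsched_neighbours D x c : is_schedule D ->
  fsched D x c =
  r8 (if blk D (ord_pred c) < blk D c then fsched D x (ord_pred c) else x (ord_pred c))
     (x c)
     (if blk D (ordS c) < blk D c then fsched D x (ordS c) else x (ordS c)).
Proof. by move=> sD; rewrite fsched_cell // /f8 !fsched_take // ltnn. Qed.

Lemma fsched_succ_first D x i : is_schedule D ->
  blk D (ordS i) < blk D i -> fsched D x i = false.
Proof.
move=> sD lt_succ_i; rewrite fsched_neighbours // lt_succ_i.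
rewrite [fsched D x (ordS i)]fsched_neighbours // ordSK (leq_gtF (ltnW lt_succ_i)).
by rewrite /r8; case: (x i); rewrite /= ?andbF.
Qed.

Lemma eq_fsched D D' x (P : pred 'I_n) : is_schedule D -> is_schedule D' ->
  {in P, forall c, fsched D x c = fsched D' x c} ->
  (forall c j, c \notin P -> j \in [:: ord_pred c; ordS c] ->
     (blk D j < blk D c) = (blk D' j < blk D' c)) ->
  forall c, fsched D x c = fsched D' x c.
Proof.
move=> sD sD' eq_P same_order c.
have [m lt_c_m] := ubnP (blk D c); elim: m => // m IH in c lt_c_m *.
have [/eq_P // | c_notin_P] := boolP (c \in P).
rewrite (fsched_neighbours x c sD) (fsched_neighbours x c sD').
rewrite -!same_order ?inE ?eqxx ?orbT //.
by congr r8; case: ltnP => // lt_j_c; apply: IH (leq_trans lt_j_c lt_c_m).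
Qed.

Lemma lab_OminusP D u v : reflect (lab D u v = Ominus) (blk D u < blk D v).
Proof. by rewrite /lab ltnNge; case: leqP; constructor. Qed.

Lemma eq_lab_ltn D D' u v : lab D u v = lab D' u v ->
  (blk D u < blk D v) = (blk D' u < blk D' v).
Proof. by move=> eq_lab; apply/lab_OminusP/lab_OminusP; rewrite eq_lab. Qed.

End BlockSequential.

Theorem mainTheorem15 (n : nat) (D D' : seq {set 'I_n}) (i : 'I_n) :
  3 <= n ->
  is_schedule D -> is_schedule D' ->
  lab D (ordS i) i = Ominus ->
  lab D' (ordS i) i = Ominus ->
  lab D (ord_pred i) i <> lab D' (ord_pred i) i ->
  (forall j1 j2 : 'I_n, (j2 = ordS j1 \/ j1 = ordS j2) ->
     (j1, j2) <> (ord_pred i, i) -> lab D j1 j2 = lab D' j1 j2) ->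
  forall (x : config n) (c : 'I_n), fsched D x c = fsched D' x c.
Proof.
move=> _ sD sD' lab_succ lab_succ' _ same_lab x.
apply: (eq_fsched (P := pred1 i) sD sD').
  by move=> c /eqP ->; rewrite !fsched_succ_first //; apply/lab_OminusP.
move=> c j c_notin_i j_nbr; apply: eq_lab_ltn; apply: same_lab.
- by move: j_nbr; rewrite !inE => /orP[/eqP-> | /eqP->]; [left; rewrite ord_predK | right].
- by case=> _ c_eq_i; rewrite inE c_eq_i eqxx in c_notin_i.
Qed.
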